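(* Let $1\le k<n$ and $A\in\mathbb{M}_n$. Then $$\mathcal{P}(A)=\bigcup\{e^{i\theta}S(P):\ \theta\in[0,2\pi),\ P \text{ a rank-}k\text{ orthogonal projection with } |\operatorname{tr}(AP)|=w_k(A)\}.$$
   Context: For $A\in\mathbb{M}_n$: $W_k(A)=\{\operatorname{tr}(AP): P=P^*=P^2,\operatorname{tr}P=k\}$, $w_k(A)=\max\{|z|:z\in W_k(A)\}$. $A\parallel B$ means $w_k(A+\mu B)=w_k(A)+w_k(B)$ for some $|\mu|=1$. $\mathcal{P}(A)=\{B\in\mathbb{M}_n: B\parallel A\}$. For a rank-$k$ orthogonal projection $P$, $S(P)=\{B\in\mathbb{M}_n:\operatorname{tr}(BP)=w_k(B)\}$. *)

From HB Require Import structures.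
From mathcomp Require Import all_boot all_order all_algebra.
From mathcomp Require Import complex.
From mathcomp Require Import all_classical all_reals.
From mathcomp Require Import trigo.
Set Implicit Arguments. Unset Strict Implicit. Unset Printing Implicit Defensive.
Import Order.TTheory GRing.Theory Num.Theory.
Local Open Scope ring_scope.
Local Open Scope classical_set_scope.

Definition adjmx (R : realType) (n : nat) (A : 'M[R[i]]_n) : 'M[R[i]]_n :=
  map_mx (@conjc R) A^T.

(* P is an orthogonal projection of trace (= rank) k : P = P^* = P^2, tr P = k *)
Definition orth_proj (R : realType) (n k : nat) (P : 'M[R[i]]_n) : Prop :=
  [/\ P = adjmx P, P *m P = P & \tr P = k%:R].

Definition Wk (R : realType) (n k : nat) (A : 'M[R[i]]_n) : set R[i] :=
  [set z | exists P : 'M[R[i]]_n, orth_proj k P /\ z = \tr (A *m P)].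

(* k-numerical radius w_k(A) = max { |z| : z in W_k(A) } (taken as the sup,
   which is attained since the set of projections is compact) *)
Definition wk (R : realType) (n k : nat) (A : 'M[R[i]]_n) : R :=
  sup [set Normc.normc z | z in Wk k A].

Definition wk_parallel (R : realType) (n k : nat) (A B : 'M[R[i]]_n) : Prop :=
  exists mu : R[i], Normc.normc mu = 1 /\ wk k (A + mu *: B) = wk k A + wk k B.

Definition Pset (R : realType) (n k : nat) (A : 'M[R[i]]_n) : set 'M[R[i]]_n :=
  [set B | wk_parallel k B A].

Definition Sset (R : realType) (n k : nat) (P : 'M[R[i]]_n) : set 'M[R[i]]_n :=
  [set B | \tr (B *m P) = ((wk k B)%:C)%C].

Definition expi (R : realType) (t : R) : R[i] := (cos t +i* sin t)%C.

(* Both inclusions rest on the triangle inequality for |tr(. P)| and on the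
   fact that w_k is attained, which holds because the rank-k orthogonal
   projections form a compact set. If w_k(C + mu A) = w_k(C) + w_k(A), a
   projection P attaining w_k(C + mu A) must attain both w_k(C) and w_k(A);
   writing tr(CP) = e^{i theta} |tr(CP)| puts e^{-i theta} C in S(P).
   Conversely, if C = e^{i theta} B with B in S(P) and |tr(AP)| = w_k(A), the
   unimodular mu rotating tr(AP) onto e^{i theta} |tr(AP)| gives
   |tr((C + mu A) P)| = w_k(B) + w_k(A). *)
From HB Require Import structures.
From mathcomp Require Import all_boot all_order all_algebra.
From mathcomp Require Import complex.
From mathcomp Require Import all_classical all_reals all_analysis.
From mathcomp Require Import ring lra.
Set Implicit Arguments. Unset Strict Implicit. Unset Printing Implicit Defensive.
Import Order.TTheory GRing.Theory Num.Theory.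
Import numFieldNormedType.Exports.
Local Open Scope ring_scope.
Local Open Scope classical_set_scope.

Local Notation normc := Normc.normc.

Lemma normc_ge0 (R : rcfType) (z : R[i]) : 0 <= normc z.
Proof. by case: z => a b; apply: sqrtr_ge0. Qed.

Section ComplexContinuity.
Variables (R : realType) (T : topologicalType).
Implicit Types f g : T -> R[i].

Definition continuousC f :=
  continuous (fun v => complex.Re (f v)) /\ continuous (fun v => complex.Im (f v)).

Lemma continuousC_cst (c : R[i]) : continuousC (fun _ => c).
Proof. by split; apply: cst_continuous. Qed.

Lemma continuousCD f g :
  continuousC f -> continuousC g -> continuousC (fun v => f v + g v).
Proof.
move=> [f1 f2] [g1 g2]; split => x.
- have -> : (fun v => complex.Re (f v + g v)) =
            (fun v => complex.Re (f v) + complex.Re (g v)).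
    by apply: funext => v; case: (f v) => ? ?; case: (g v).
  by apply: cvgD; [exact: f1 | exact: g1].
- have -> : (fun v => complex.Im (f v + g v)) =
            (fun v => complex.Im (f v) + complex.Im (g v)).
    by apply: funext => v; case: (f v) => ? ?; case: (g v).
  by apply: cvgD; [exact: f2 | exact: g2].
Qed.

Lemma continuousCN f : continuousC f -> continuousC (fun v => - f v).
Proof.
move=> [f1 f2]; split => x.
- have -> : (fun v => complex.Re (- f v)) = (fun v => - complex.Re (f v)).
    by apply: funext => v; case: (f v).
  by apply: cvgN; exact: f1.
- have -> : (fun v => complex.Im (- f v)) = (fun v => - complex.Im (f v)).
    by apply: funext => v; case: (f v).
  by apply: cvgN; exact: f2.
Qed.

Lemma continuousCM f g :
  continuousC f -> continuousC g -> continuousC (fun v => f v * g v).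
Proof.
move=> [f1 f2] [g1 g2]; split => x.
- have -> : (fun v => complex.Re (f v * g v)) = (fun v =>
      complex.Re (f v) * complex.Re (g v) - complex.Im (f v) * complex.Im (g v)).
    by apply: funext => v; case: (f v) => ? ?; case: (g v).
  by apply: cvgB; apply: cvgM; [exact: f1 | exact: g1 | exact: f2 | exact: g2].
- have -> : (fun v => complex.Im (f v * g v)) = (fun v =>
      complex.Re (f v) * complex.Im (g v) + complex.Im (f v) * complex.Re (g v)).
    by apply: funext => v; case: (f v) => ? ?; case: (g v).
  by apply: cvgD; apply: cvgM; [exact: f1 | exact: g2 | exact: f2 | exact: g1].
Qed.

Lemma continuousCJ f : continuousC f -> continuousC (fun v => conjc (f v)).
Proof.
move=> [f1 f2]; split => x.
- have -> : (fun v => complex.Re (conjc (f v))) = (fun v => complex.Re (f v)).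
    by apply: funext => v; case: (f v).
  exact: f1.
- have -> : (fun v => complex.Im (conjc (f v))) = (fun v => - complex.Im (f v)).
    by apply: funext => v; case: (f v).
  by apply: cvgN; exact: f2.
Qed.

Lemma continuousC_sum (I : Type) (r : seq I) (F : I -> T -> R[i]) :
  (forall i, continuousC (F i)) -> continuousC (fun v => \sum_(i <- r) F i v).
Proof.
move=> cF; elim: r => [|a r IH].
  under eq_fun do rewrite big_nil; exact: continuousC_cst.
under eq_fun do rewrite big_cons; exact: continuousCD.
Qed.

Lemma continuous_normc f : continuousC f -> continuous (fun v => normc (f v)).
Proof.
move=> [f1 f2].
have -> : (fun v => normc (f v)) =
          (fun v => Num.sqrt (complex.Re (f v) ^+ 2 + complex.Im (f v) ^+ 2)).
  by apply: funext => v; case: (f v).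
move=> x; apply: continuous_comp; last exact: sqrt_continuous.
by apply: cvgD; rewrite expr2; apply: cvgM; [exact: f1 | exact: f1 | exact: f2 | exact: f2].
Qed.

Lemma closed_continuousC_eq f (c : R[i]) : continuousC f -> closed [set v | f v = c].
Proof.
move=> [f1 f2].
have -> : [set v | f v = c] =
   (fun v => complex.Re (f v)) @^-1` [set complex.Re c] `&`
   (fun v => complex.Im (f v)) @^-1` [set complex.Im c].
  apply/seteqP; split => v /=; first by move=> ->.
  by case: (f v) => a b; case: c => ? ? /= [-> ->].
by apply: closedI; apply: preimage_closed; do ?exact: closed_eq; move=> x _;
  [exact: f1 | exact: f2].
Qed.

Definition continuousMx (p q : nat) (F : T -> 'M[R[i]]_(p, q)) :=
  forall i j, continuousC (fun v => F v i j).

Lemma continuousMx_cst (p q : nat) (M : 'M[R[i]]_(p, q)) :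
  continuousMx (fun _ => M).
Proof. by move=> i j; apply: continuousC_cst. Qed.

Lemma continuousMx_mul (p q r : nat)
    (F : T -> 'M[R[i]]_(p, q)) (G : T -> 'M[R[i]]_(q, r)) :
  continuousMx F -> continuousMx G -> continuousMx (fun v => F v *m G v).
Proof.
move=> cF cG i j; under eq_fun do rewrite mxE.
by apply: continuousC_sum => l; apply: continuousCM.
Qed.

Lemma continuousMx_adj (p : nat) (F : T -> 'M[R[i]]_p) :
  continuousMx F -> continuousMx (fun v => adjmx (F v)).
Proof. by move=> cF i j; under eq_fun do rewrite !mxE; apply: continuousCJ. Qed.

Lemma continuousC_tr (p : nat) (F : T -> 'M[R[i]]_p) :
  continuousMx F -> continuousC (fun v => \tr (F v)).
Proof. by move=> cF; apply: continuousC_sum => l; apply: cF. Qed.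

Lemma closed_continuousMx_eq (p q : nat) (F G : T -> 'M[R[i]]_(p, q)) :
  continuousMx F -> continuousMx G -> closed [set v | F v = G v].
Proof.
move=> cF cG.
have -> : [set v | F v = G v] =
    \bigcap_(ij in [set: 'I_p * 'I_q]) [set v | F v ij.1 ij.2 - G v ij.1 ij.2 = 0].
  apply/seteqP; split => v /=; first by move=> eqFG ij _ /=; rewrite eqFG subrr.
  by move=> eqFG; apply/matrixP => i j; apply/eqP; rewrite -subr_eq0 (eqFG (i, j)).
apply: closed_bigI => ij _; apply: closed_continuousC_eq.
by apply: continuousCD; last apply: continuousCN; [exact: cF | exact: cG].
Qed.

End ComplexContinuity.

Lemma hermitian_idempotent_entry_bound (R : realType) (n : nat) (P : 'M[R[i]]_n) :
  P = adjmx P -> P *m P = P -> forall i j,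
  `|complex.Re (P i j)| <= 1 /\ `|complex.Im (P i j)| <= 1.
Proof.
move=> herm idem i j.
have P_sym a b : P b a = conjc (P a b) by rewrite {1}herm !mxE.
have Re_mul_conjc z : complex.Re (z * conjc z) = complex.Re z ^+ 2 + complex.Im z ^+ 2.
  by case: z => a b /=; ring.
have Pii_real : complex.Im (P i i) = 0.
  by have := P_sym i i; case: (P i i) => a b /= [] ?; lra.
(* The diagonal entry P_ii = (P P^* )_ii is the squared norm of the i-th row. *)
pose s := complex.Re (P i i).
have row_norm : s = \sum_l (complex.Re (P i l) ^+ 2 + complex.Im (P i l) ^+ 2).
  rewrite /s -{1}idem mxE (big_morph _ (id1 := 0) (op1 := +%R)) //; last by case=> ? ? [].
  by apply: eq_bigr => l _; rewrite (P_sym i l) Re_mul_conjc.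
have entry_le l : complex.Re (P i l) ^+ 2 + complex.Im (P i l) ^+ 2 <= s.
  rewrite row_norm (bigD1 l) //= lerDl; apply: sumr_ge0 => p _.
  by apply: addr_ge0; apply: sqr_ge0.
have s_le1 : s <= 1 by have := entry_le i; rewrite Pii_real -/s; nra.
have := entry_le j; move: (complex.Re (P i j)) (complex.Im (P i j)) => a b ab_le.
by rewrite !ler_norml; split; apply/andP; split; nra.
Qed.

Lemma orth_proj_pid (R : realType) (n k : nat) :
  (k <= n)%N -> orth_proj k (pid_mx k : 'M[R[i]]_n).
Proof.
move=> kn; split.
- by rewrite /adjmx tr_pid_mx map_pid_mx.
- by rewrite pid_mx_id.
- rewrite /mxtrace (eq_bigr (fun i : 'I_n => if (i < k)%N then 1 else 0)).
    by rewrite -big_mkcond -(big_ord_widen _ (fun=> 1)) // sumr_const card_ord.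
  by move=> i _; rewrite mxE eqxx; case: (_ < _)%N.
Qed.

Section Attainment.
Variables (R : realType) (n k : nat).
Local Notation coords := ('rV[R]_(n * n) * 'rV[R]_(n * n))%type.

(* Compactness is argued in the real space of coordinates: a complex matrix is
   encoded by the pair of (vectorized) real and imaginary parts. *)
Definition mx_of_coords (v : coords) : 'M[R[i]]_n :=
  \matrix_(i, j) (v.1 ord0 (mxvec_index i j) +i* v.2 ord0 (mxvec_index i j))%C.

Definition coords_of_mx (P : 'M[R[i]]_n) : coords :=
  (mxvec (map_mx (@complex.Re R) P), mxvec (map_mx (@complex.Im R) P)).

Lemma coords_of_mxK : cancel coords_of_mx mx_of_coords.
Proof. by move=> P; apply/matrixP => i j; rewrite !mxE !mxvecE !mxE; case: (P i j). Qed.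

Lemma continuousMx_mx_of_coords : continuousMx mx_of_coords.
Proof.
move=> i j; under eq_fun do rewrite mxE; split => x /=.
- apply: (@continuous_comp _ _ _ fst (fun w : 'rV[R]_(n * n) => w ord0 _)).
    exact: cvg_fst.
  exact: coord_continuous.
- apply: (@continuous_comp _ _ _ snd (fun w : 'rV[R]_(n * n) => w ord0 _)).
    exact: cvg_snd.
  exact: coord_continuous.
Qed.

Definition orth_proj_coords := [set v : coords | orth_proj k (mx_of_coords v)].

Lemma closed_orth_proj_coords : closed orth_proj_coords.
Proof.
have -> : orth_proj_coords =
    [set v | mx_of_coords v = adjmx (mx_of_coords v)] `&`
    [set v | mx_of_coords v *m mx_of_coords v = mx_of_coords v] `&`
    [set v | \tr (mx_of_coords v) = k%:R].
  by apply/seteqP; split => v /= => [[]|[[]]].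
have cP := continuousMx_mx_of_coords.
apply: closedI; first apply: closedI.
- by apply: closed_continuousMx_eq => //; exact: continuousMx_adj.
- by apply: closed_continuousMx_eq => //; exact: continuousMx_mul.
- by apply: closed_continuousC_eq; exact: continuousC_tr.
Qed.

Lemma compact_orth_proj_coords : compact orth_proj_coords.
Proof.
pose box := [set w : 'rV[R]_(n * n) | forall i, `[-1, 1]%classic (w ord0 i)].
have box_compact : compact box.
  exact: (@rV_compact R _ (fun=> `[-1, 1]%classic) (fun _ => @segment_compact R _ _)).
apply: (subclosed_compact closed_orth_proj_coords (compact_setX box_compact box_compact)).
move=> v [herm idem _]; split => idx; case/mxvec_indexP: idx => i j;
  have [] := hermitian_idempotent_entry_bound herm idem i j;
  by rewrite !mxE /= !in_itv /= -!ler_norml.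
Qed.

Lemma orth_proj_max_tr (M : 'M[R[i]]_n) : (k <= n)%N ->
  exists2 P0, orth_proj k P0 & forall P, orth_proj k P ->
    normc (\tr (M *m P)) <= normc (\tr (M *m P0)).
Proof.
move=> kn.
have nonempty : orth_proj_coords !=set0.
  exists (coords_of_mx (pid_mx k)); rewrite /orth_proj_coords /= coords_of_mxK.
  exact: orth_proj_pid.
have cont : {within orth_proj_coords,
              continuous (fun v => normc (\tr (M *m mx_of_coords v)))}.
  apply: continuous_subspaceT; apply: continuous_normc; apply: continuousC_tr.
  by apply: continuousMx_mul; [exact: continuousMx_cst | exact: continuousMx_mx_of_coords].
have [v vK vmax] := compact_EVT_max nonempty compact_orth_proj_coords cont.
exists (mx_of_coords v); first by rewrite inE in vK.
move=> P PK; have := vmax (coords_of_mx P); rewrite coords_of_mxK; apply.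
by rewrite inE /orth_proj_coords /= coords_of_mxK.
Qed.

End Attainment.

Section UnitCircle.
Variable R : realType.

Lemma normc_real (r : R) : 0 <= r -> normc (r%:C)%C = r.
Proof. by move=> r0 /=; rewrite expr0n /= addr0 sqrtr_sqr ger0_norm. Qed.

Lemma normc_conj (z : R[i]) : normc (conjc z) = normc z.
Proof. by case: z => a b /=; rewrite sqrrN. Qed.

Lemma normc_expi (t : R) : normc (expi t) = 1.
Proof. by rewrite /= cos2Dsin2 sqrtr1. Qed.

Lemma conjc_expiK (t : R) : conjc (expi t) * expi t = 1.
Proof.
apply/eqP; rewrite eq_complex /= !mulNr opprK -!expr2 cos2Dsin2.
by rewrite mulrC subrr !eqxx.
Qed.

Lemma expi_polar (z : R[i]) :
  exists2 t : R, 0 <= t < 2 * pi & z = expi t * (normc z)%:C%C.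
Proof.
have pi_pos : 0 < pi :> R by apply: pi_gt0.
have [->|z_neq0] := eqVneq z 0.
  by exists 0; [rewrite lexx mulr_gt0 | rewrite Normc.normc0 mulr0].
case: z z_neq0 => x y z_neq0; set r := normc (x +i* y)%C.
have r_gt0 : 0 < r.
  by rewrite lt_def normc_ge0 andbT; apply: contra z_neq0 => /eqP/Normc.eq0_normc ->.
have r2 : r ^+ 2 = x ^+ 2 + y ^+ 2 by rewrite sqr_sqrtr // addr_ge0 // sqr_ge0.
set a := x / r; set b := y / r.
have xE : x = a * r by rewrite /a divfK ?gt_eqF.
have yE : y = b * r by rewrite /b divfK ?gt_eqF.
have ab1 : a ^+ 2 + b ^+ 2 = 1.
  by rewrite !expr_div_n -mulrDl -r2 divff // expf_neq0 ?gt_eqF.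
have a_itv : -1 <= a <= 1 by apply/andP; split; nra.
have sqrt_b : Num.sqrt (1 - a ^+ 2) = `|b| by rewrite -sqrtr_sqr; congr Num.sqrt; lra.
have cos_acos : cos (acos a) = a by apply: acosK; rewrite in_itv.
have acos_lb := acos_ge0 a_itv; have acos_ub := acos_lepi a_itv.
have [b_ge0|b_lt0] := leP 0 b.
  exists (acos a); first by apply/andP; split => //; lra.
  rewrite /expi cos_acos sin_acos // sqrt_b ger0_norm //.
  by apply/eqP; rewrite eq_complex /= !mulr0 subr0 add0r xE yE !eqxx.
have acos_pos : 0 < acos a by apply: acos_gt0; apply/andP; split; nra.
exists (2 * pi - acos a); first by apply/andP; split; lra.
rewrite /expi cosB sinB mulr_natl cos2pi sin2pi cos_acos sin_acos // sqrt_b ltr0_norm //.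
by apply/eqP; rewrite eq_complex /= xE yE; apply/andP; split; apply/eqP; ring.
Qed.

End UnitCircle.

Section KNumericalRadius.
Variables (R : realType) (n k : nat).
Hypothesis k_le_n : (k <= n)%N.
Implicit Types A B C M P : 'M[R[i]]_n.

Lemma has_sup_normc_Wk M : has_sup [set normc z | z in Wk k M].
Proof.
have [P0 P0proj P0max] := orth_proj_max_tr M k_le_n.
split; first by exists (normc (\tr (M *m P0))), (\tr (M *m P0)) => //; exists P0.
by exists (normc (\tr (M *m P0))) => _ [_ [P [Pproj ->]] <-]; exact: P0max.
Qed.

Lemma wk_ub M P : orth_proj k P -> normc (\tr (M *m P)) <= wk k M.
Proof.
move=> Pproj; apply: sup_upper_bound; first exact: has_sup_normc_Wk.
by exists (\tr (M *m P)) => //; exists P.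
Qed.

Lemma wk_attained M : exists2 P, orth_proj k P & normc (\tr (M *m P)) = wk k M.
Proof.
have [P0 P0proj P0max] := orth_proj_max_tr M k_le_n.
exists P0 => //; apply/le_anti; rewrite wk_ub //=.
apply: ge_sup; first by exists (normc (\tr (M *m P0))), (\tr (M *m P0)) => //; exists P0.
by move=> _ [_ [P [Pproj ->]] <-]; exact: P0max.
Qed.

Lemma wk_ge0 M : 0 <= wk k M.
Proof. by have [P _ <-] := wk_attained M; exact: normc_ge0. Qed.

Lemma wkZ (c : R[i]) M : wk k (c *: M) = normc c * wk k M.
Proof.
apply/le_anti/andP; split.
- have [P Pproj <-] := wk_attained (c *: M).
  rewrite -scalemxAl mxtraceZ Normc.normcM.
  by apply: ler_wpM2l; [exact: normc_ge0 | exact: wk_ub].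
- have [P Pproj <-] := wk_attained M.
  by rewrite -Normc.normcM -mxtraceZ scalemxAl wk_ub.
Qed.

Lemma wkD M1 M2 : wk k (M1 + M2) <= wk k M1 + wk k M2.
Proof.
have [P Pproj <-] := wk_attained (M1 + M2).
rewrite mulmxDl mxtraceD; apply: le_trans (le_normcD _ _) _.
by apply: lerD; apply: wk_ub.
Qed.

Lemma wk_parallel_common_max C A : wk_parallel k C A ->
  exists2 P, orth_proj k P &
    normc (\tr (C *m P)) = wk k C /\ normc (\tr (A *m P)) = wk k A.
Proof.
case=> mu [mu1 wkCA]; have [P Pproj PCA] := wk_attained (C + mu *: A).
have trC := wk_ub C Pproj; have trA := wk_ub A Pproj.
have : wk k C + wk k A <= normc (\tr (C *m P)) + normc (\tr (A *m P)).
  rewrite -wkCA -PCA mulmxDl mxtraceD -scalemxAl mxtraceZ.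
  by apply: le_trans (le_normcD _ _) _; rewrite Normc.normcM mu1 mul1r.
by exists P => //; split; lra.
Qed.

Lemma wk_parallel_rotation C A : wk_parallel k C A ->
  exists (t : R) (P : 'M[R[i]]_n), [/\ 0 <= t < 2 * pi, orth_proj k P,
    normc (\tr (A *m P)) = wk k A &
    exists2 B, Sset k P B & C = expi t *: B].
Proof.
move=> /wk_parallel_common_max[P Pproj [trC trA]].
have [t t_itv trCE] := expi_polar (\tr (C *m P)).
exists t, P; split => //; exists (conjc (expi t) *: C); last first.
  by rewrite scalerA mulrC conjc_expiK scale1r.
have SB : \tr ((conjc (expi t) *: C) *m P) = (wk k (conjc (expi t) *: C))%:C%C.
  rewrite wkZ normc_conj normc_expi mul1r -trC -scalemxAl mxtraceZ.
  by rewrite {1}trCE mulrA conjc_expiK mul1r.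
exact: SB.
Qed.

Lemma wk_parallel_of_rotation (t : R) P A B :
  orth_proj k P -> normc (\tr (A *m P)) = wk k A -> Sset k P B ->
  wk_parallel k (expi t *: B) A.
Proof.
move=> Pproj trA trB; set a := \tr (A *m P).
(* mu rotates a onto the direction e^{it} of tr((e^{it} B) P); any mu works if a = 0. *)
pose mu := if a == 0 then 1 else expi t * (normc a)%:C%C / a.
have mu1 : normc mu = 1.
  rewrite /mu; case: eqP => [_|/eqP a_neq0]; first exact: Normc.normc1.
  rewrite !Normc.normcM Normc.normcV normc_expi mul1r normc_real ?normc_ge0 // divff //.
  by apply: contra a_neq0 => /eqP/Normc.eq0_normc ->.
have mu_a : mu * a = expi t * (normc a)%:C%C.
  by rewrite /mu; case: eqP => [->|/eqP a_neq0]; rewrite ?Normc.normc0 ?mulr0 ?divfK.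
exists mu; split => //; apply/le_anti/andP; split.
  by apply: le_trans (wkD _ _) _; rewrite [wk k (mu *: A)]wkZ mu1 mul1r.
rewrite wkZ normc_expi mul1r; apply: le_trans (wk_ub _ Pproj).
rewrite mulmxDl mxtraceD -!scalemxAl !mxtraceZ trB -/a mu_a trA -mulrDr -raddfD.
by rewrite Normc.normcM normc_expi mul1r normc_real // addr_ge0 ?wk_ge0.
Qed.

End KNumericalRadius.

Theorem mainTheorem3 (R : realType) (n k : nat) (A : 'M[R[i]]_n) :
  (1 <= k)%N -> (k < n)%N ->
  Pset k A =
  [set C | exists (theta : R) (P : 'M[R[i]]_n),
      [/\ 0 <= theta < 2 * pi, orth_proj k P,
          Normc.normc (\tr (A *m P)) = wk k A &
          exists2 B, Sset k P B & C = expi theta *: B]].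
Proof.
move=> _ /ltnW k_le_n; apply/seteqP; split => C /=.
- exact: wk_parallel_rotation.
- by case=> t [P [_ Pproj trA [B SB ->]]]; apply: wk_parallel_of_rotation trA SB.
Qed.
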